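(* In the standing setup below, for every color $\lambda\in\Lambda$ the cycle $\mathsf D_\lambda$ contains an outer edge.
   Context: Colored graphs: a (colored) graph is a finite set of pairs $(e,\alpha)$ with the $e$'s pairwise distinct 2-element vertex subsets $uv$ and $\alpha$ colors (repeats allowed); $V(\cdot),E(\cdot),\chi(\cdot)$ are vertex set, underlying uncolored edge set, color set; rainbow means $|\chi(\mathsf G)|=|\mathsf G|$, almost rainbow means $|\chi(\mathsf G)|=|\mathsf G|-1$; subgraphs are subsets; $\mathsf G+\mathsf e=\mathsf G\cup\{\mathsf e\}$, $\mathsf G-\mathsf e=\mathsf G\setminus\{\mathsf e\}$. Paths/cycles/trees are colored graphs whose underlying edges form a path (two distinct terminals)/cycle/tree; lengths count edges. A long rainbow odd cycle is a rainbow cycle of odd length $\ge7$. A theta graph is a union of three paths with the same terminals $s\ne t$, pairwise sharing no vertex except $s,t$ and no underlying edge; a bad piece is an almost rainbow theta graph with $\ge6$ vertices that is the union of three rainbow such paths. A partition of a graph $\mathsf G$ is a collection of graphs (parts) with union $\mathsf G$, any two sharing at most one vertex and no color. A Frankenstein graph is a graph with a partition $\{\mathsf C_1,..,\mathsf C_c,\mathsf B_1,..,\mathsf B_b,\mathsf T_1,..,\mathsf T_t\}$ ($c+b+t\ge1$) into long rainbow odd cycles $\mathsf C_i$, bad pieces $\mathsf B_i$ and pairwise vertex-disjoint rainbow trees $\mathsf T_i$, having no rainbow even cycle as a subgraph. For a tree $\mathsf T$ with $V(\mathsf T)\subset\mathbb Z_{>0}$, its root is $\min V(\mathsf T)$ and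 $\mathrm{depth}_{\mathsf T}(v)$ is the length of the path in $\mathsf T$ from the root to $v$; the total depth $\mathrm{Depth}(\mathfrak F)$ of a Frankenstein graph is $\sum_{i=1}^t\sum_{v\in V(\mathsf T_i)}\mathrm{depth}_{\mathsf T_i}(v)$. Standing setup: $n\ge1$, $m=\lfloor 6(n-1)/5\rfloor+1$, and $\mathcal D=(\mathsf D_1,\dots,\mathsf D_m)$ is a family of even cycles on $[n]=\{1,\dots,n\}$, all edges of $\mathsf D_i$ having color $i$, such that no rainbow even cycle is a subgraph of $\bigcup_i\mathsf D_i$ (a subgraph of $\mathcal D$ means a simple graph $\subseteq\bigcup_i\mathsf D_i$). Two edges are coincident if they have the same vertex pair and different colors. $\mathfrak F_*$ is a Frankenstein subgraph of $\mathcal D$ (with partition) chosen to maximize $c$, then $b$, then $|\mathfrak F_*|$, then to minimize $\mathrm{Depth}(\mathfrak F_* )$; its partition is $\{\mathsf C_1,..,\mathsf C_c,\mathsf B_1,..,\mathsf B_b,\mathsf T_1,..,\mathsf T_t\}$. Let $\Lambda=\{1,\dots,m\}\setminus\chi(\mathfrak F_* )$. An outer edge is an edge $\mathsf f$ of $\bigcup_{\lambda\in\Lambda}\mathsf D_\lambda$ such that no edge of $\mathfrak F_*$ is coincident to $\mathsf f$. An outer cycle of an outer edge $\mathsf f$ is a rainbow cycle of length $3$ or $5$ in $\mathfrak F_*+\mathsf f$ containing $\mathsf f$. *)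

From Stdlib Require Import ClassicalEpsilon.
From mathcomp Require Import all_boot.
Set Implicit Arguments.
Unset Strict Implicit.
Unset Printing Implicit Defensive.

Section ColoredGraphs.
Variable n : nat.          (* vertex set [n], represented as 'I_n *)
Variable C : finType.

(* a colored edge: (underlying vertex pair, color) *)
Definition cedge := ({set 'I_n} * C)%type.
Definition cgraph := {set cedge}.

Definition is_cgraph (G : cgraph) : Prop :=
  (forall e, e \in G -> #|e.1| = 2) /\ {in G &, injective (fun e : cedge => e.1)}.

Definition uE (G : cgraph) : {set {set 'I_n}} := [set e.1 | e in G].
Definition uV (G : cgraph) : {set 'I_n} := \bigcup_(e in G) e.1.
Definition colors (G : cgraph) : {set C} := [set e.2 | e in G].

Definition rainbow (G : cgraph) : Prop := #|colors G| = #|G|.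
Definition almost_rainbow (G : cgraph) : Prop := #|colors G| + 1 = #|G|.

(* path with terminals s and t (s <> t follows from uniq and q nonempty) *)
Definition is_path (G : cgraph) (s t : 'I_n) : Prop :=
  is_cgraph G /\
  exists q : seq 'I_n,
    [/\ q != [::], uniq (s :: q), last s q = t &
        uE G = [set [set e.1; e.2] | e in zip (s :: q) q]].

Definition is_cycle (G : cgraph) : Prop :=
  is_cgraph G /\
  exists p : seq 'I_n,
    [/\ 3 <= size p, uniq p &
        uE G = [set [set e.1; e.2] | e in zip p (rot 1 p)]].

Definition adj (G : cgraph) : rel 'I_n := fun x y => [set x; y] \in uE G.

Definition is_tree (G : cgraph) : Prop :=
  [/\ is_cgraph G, G != set0,
      (forall u v, u \in uV G -> v \in uV G -> connect (adj G) u v) &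
      (forall H : cgraph, H \subset G -> ~ is_cycle H)].

Definition long_rainbow_odd_cycle (G : cgraph) : Prop :=
  [/\ is_cycle G, rainbow G, odd #|G| & (7 <= #|G|)].

Definition is_theta_of (B P1 P2 P3 : cgraph) (s t : 'I_n) : Prop :=
  [/\ s != t, [/\ is_path P1 s t, is_path P2 s t & is_path P3 s t],
      B = P1 :|: P2 :|: P3,
      [/\ uV P1 :&: uV P2 \subset [set s; t],
          uV P1 :&: uV P3 \subset [set s; t] &
          uV P2 :&: uV P3 \subset [set s; t]] &
      [/\ [disjoint uE P1 & uE P2],
          [disjoint uE P1 & uE P3] &
          [disjoint uE P2 & uE P3]]].

Definition bad_piece (B : cgraph) : Prop :=
  [/\ almost_rainbow B, 6 <= #|uV B| &
      exists (s t : 'I_n) (P1 P2 P3 : cgraph), [/\ is_theta_of B P1 P2 P3 s t,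
                               rainbow P1, rainbow P2 & rainbow P3]].

Definition no_rainbow_even_cycle (G : cgraph) : Prop :=
  forall H : cgraph, H \subset G -> is_cycle H -> rainbow H -> odd #|H|.

Definition is_partition (G : cgraph) (ps : seq cgraph) : Prop :=
  \bigcup_(P <- ps) P = G /\
  forall i j, i < size ps -> j < size ps -> i != j ->
    #|uV (nth set0 ps i) :&: uV (nth set0 ps j)| <= 1 /\
    [disjoint colors (nth set0 ps i) & colors (nth set0 ps j)].

Definition frankenstein (G : cgraph) (Cs Bs Ts : seq cgraph) : Prop :=
  [/\ is_cgraph G, 1 <= size Cs + size Bs + size Ts,
      is_partition G (Cs ++ Bs ++ Ts),
      [/\ (forall P : cgraph, P \in Cs -> long_rainbow_odd_cycle P),
      (forall P : cgraph, P \in Bs -> bad_piece P),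
      (forall P : cgraph, P \in Ts -> is_tree P /\ rainbow P) &
      (forall i j, i < size Ts -> j < size Ts -> i != j ->
         [disjoint uV (nth set0 Ts i) & uV (nth set0 Ts j)])] &
      no_rainbow_even_cycle G].

Definition is_root (T : cgraph) (r : 'I_n) : Prop :=
  r \in uV T /\ forall u, u \in uV T -> (r <= u)%N.

Definition depth (T : cgraph) (v : 'I_n) : nat :=
  match excluded_middle_informative
          (exists P : cgraph, P \subset T /\ exists r, is_root T r /\ is_path P r v) with
  | left H => #|proj1_sig (constructive_indefinite_description _ H)|
  | right _ => 0
  end.

Definition Depth (Ts : seq cgraph) : nat :=
  \sum_(T <- Ts) \sum_(v in uV T) depth T v.

End ColoredGraphs.

(* number of colors *)
Definition mcol (n : nat) : nat := (6 * (n - 1)) %/ 5 + 1.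

Section Setup.
Variable n : nat.
Local Notation m := (mcol n).
Local Notation E := (cedge n 'I_m).

Definition unionD (D : 'I_m -> {set E}) : {set E} := \bigcup_(i : 'I_m) D i.

Definition even_cycle_family (D : 'I_m -> {set E}) : Prop :=
  (forall i, [/\ is_cycle (D i), ~~ odd #|D i| & forall e, e \in D i -> e.2 = i]) /\
  no_rainbow_even_cycle (unionD D).

Definition subgraph_of_D (D : 'I_m -> {set E}) (G : {set E}) : Prop :=
  is_cgraph G /\ G \subset unionD D.

Definition frank_sub (D : 'I_m -> {set E}) (G : {set E}) (Cs Bs Ts : seq {set E}) :=
  subgraph_of_D D G /\ frankenstein G Cs Bs Ts.

Definition better (G' : {set E}) (Cs' Bs' Ts' : seq {set E})
                  (G : {set E}) (Cs Bs Ts : seq {set E}) : Prop :=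
  size Cs < size Cs' \/
  (size Cs' = size Cs /\
   (size Bs < size Bs' \/
    (size Bs' = size Bs /\
     (#|G| < #|G'| \/ (#|G'| = #|G| /\ Depth Ts' < Depth Ts))))).

Definition optimal_frankenstein (D : 'I_m -> {set E}) (F : {set E})
           (Cs Bs Ts : seq {set E}) : Prop :=
  frank_sub D F Cs Bs Ts /\
  forall G' Cs' Bs' Ts', frank_sub D G' Cs' Bs' Ts' -> ~ better G' Cs' Bs' Ts' F Cs Bs Ts.

Definition coincident (f g : E) : bool := (f.1 == g.1) && (f.2 != g.2).

Definition outer_edge (D : 'I_m -> {set E}) (F : {set E}) (f : E) : Prop :=
  f \in \bigcup_(l : 'I_m | l \notin colors F) D l /\
  forall g, g \in F -> ~~ coincident g f.

End Setup.

From mathcomp Require Import all_boot.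
From Stdlib Require Import Classical.
Set Implicit Arguments.
Unset Strict Implicit.
Unset Printing Implicit Defensive.

(* If D_lam had no outer edge, every edge of D_lam would have an edge of F on the
   same vertex pair, so F would contain an even cycle H over D_lam.  H is not
   rainbow; since parts share no colour and cycles and trees are rainbow, its
   repeated colour lies in one bad piece P, and P minus one of the two repeated
   edges, say g, is rainbow.  Two of the three paths of the theta graph P have the
   same parity, so P contains an even cycle Q, which cannot be rainbow and hence
   passes through g.  Swapping g for the edge of D_lam on the same vertex pair, of
   the colour lam unused by F, yields a rainbow even cycle in the union of the D_i. *)

Section Walks.
Variable n : nat.

Definition walk_edges (x : 'I_n) (q : seq 'I_n) : {set {set 'I_n}} :=
  [set [set e.1; e.2] | e in zip (x :: q) q].

Lemma walk_edges_nil x : walk_edges x [::] = set0.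
Proof. by apply/setP=> y; rewrite in_set0; apply/imsetP; case=> ?; rewrite in_nil. Qed.

Lemma walk_edges_cons x y q : walk_edges x (y :: q) = [set x; y] |: walk_edges y q.
Proof.
apply/setP=> X; rewrite in_setU1; apply/imsetP/idP.
- case=> e; rewrite inE => /orP[/eqP -> -> | He ->]; first by rewrite eqxx.
  by apply/orP; right; apply/imsetP; exists e.
- case/orP => [/eqP -> | /imsetP [e He ->]]; first by exists (x, y); rewrite ?inE ?eqxx.
  by exists e => //; rewrite in_cons He orbT.
Qed.

Lemma walk_edges_cat x q1 q2 :
  walk_edges x (q1 ++ q2) = walk_edges x q1 :|: walk_edges (last x q1) q2.
Proof.
elim: q1 x => [|y q IH] x /=; first by rewrite walk_edges_nil set0U.
by rewrite !walk_edges_cons IH setUA.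
Qed.

Lemma walk_edges_rcons x q y :
  walk_edges x (rcons q y) = walk_edges x q :|: [set [set last x q; y]].
Proof. by rewrite -cats1 walk_edges_cat walk_edges_cons walk_edges_nil setU0. Qed.

Lemma walk_edges_rev x q : walk_edges (last x q) (rev (belast x q)) = walk_edges x q.
Proof.
elim: q x => [|y q IH] x /=; first by rewrite !walk_edges_nil.
rewrite rev_cons walk_edges_rcons IH walk_edges_cons.
case: q IH => [|z q] IH /=; first by rewrite walk_edges_nil set0U setU0 setUC.
by rewrite rev_cons last_rcons setUC [[set y; x]]setUC.
Qed.

Lemma walk_edges_cover v x q :
  v \in x :: q -> q != [::] -> exists2 X, X \in walk_edges x q & v \in X.
Proof.
elim: q x => [|y q IH] x // Hv _; rewrite walk_edges_cons.
move: Hv; rewrite !inE => /orP[/eqP -> | /orP[/eqP -> | Hvq]].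
- by exists [set x; y]; rewrite ?inE ?eqxx.
- by exists [set x; y]; rewrite ?inE ?eqxx ?orbT.
- have Hq : q != [::] by case: q Hvq {IH}.
  have [X HX HvX] := IH y (mem_behead (s := y :: q) Hvq) Hq.
  by exists X => //; rewrite in_setU1 HX orbT.
Qed.

Lemma cycle_edges_walk x p :
  [set [set e.1; e.2] | e in zip (x :: p) (rot 1 (x :: p))] = walk_edges x (rcons p x).
Proof.
rewrite rot1_cons /walk_edges -[x :: rcons p x]/(rcons (x :: p) x) -!cats1.
by rewrite -[in RHS](cats0 (p ++ _)) zip_cat ?cats0 // size_cat addn1.
Qed.

End Walks.

Section ColoredGraphs.
Variable n : nat.
Variable C : finType.
Local Notation E := (cedge n C).
Implicit Types G H K F P Q : {set E}.

Lemma is_cgraph_subset G H : is_cgraph G -> H \subset G -> is_cgraph H.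
Proof.
move=> [G2 Ginj] /subsetP HG; split; first by move=> e /HG /G2.
by move=> x y /HG Hx /HG Hy; apply: Ginj.
Qed.

Lemma card_uE G : is_cgraph G -> #|uE G| = #|G|.
Proof. by move=> [_ Ginj]; rewrite card_in_imset. Qed.

Lemma mem_uV_walk P x q v :
  uE P = walk_edges x q -> q != [::] -> v \in x :: q -> v \in uV P.
Proof.
move=> PE q0 Hv; have [X] := walk_edges_cover Hv q0.
rewrite -PE => /imsetP [e He ->] HvX.
by apply/bigcupP; exists e.
Qed.

Lemma is_cycle_uE G H : is_cgraph G -> is_cycle H -> uE G = uE H -> is_cycle G.
Proof. by move=> Gg [_ [p [p3 p_uniq HE]]] GH; split=> //; exists p; rewrite GH. Qed.

Lemma rainbowP G : rainbow G <-> {in G &, injective (fun e : E => e.2)}.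
Proof. by split=> [H | /imset_injP /eqP //]; apply/imset_injP; rewrite -H. Qed.

Lemma not_rainbow_repeat G :
  ~ rainbow G -> exists g1 g2, [/\ g1 \in G, g2 \in G, g1 != g2 & g1.2 = g2.2].
Proof.
move=> notG; apply: NNPP => no_repeat; apply/notG/rainbowP => x y Hx Hy Hxy.
by apply: contra_not_eq no_repeat => xy; exists x, y.
Qed.

Lemma rainbow_subset G H : rainbow G -> H \subset G -> rainbow H.
Proof. by move/rainbowP=> Ginj /subsetP HG; apply/rainbowP; apply: sub_in2 Ginj. Qed.

Lemma rainbowU1 G e : rainbow G -> e.2 \notin colors G -> rainbow (e |: G).
Proof.
move=> RG eG; have eNG : e \notin G by apply: contra eG => /(imset_f (fun e : E => e.2)).
by rewrite /rainbow /colors imsetU1 !cardsU1 eNG -/(colors G) eG RG.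
Qed.

Lemma no_rainbow_even_cycle_subset G H :
  no_rainbow_even_cycle G -> H \subset G -> no_rainbow_even_cycle H.
Proof. by move=> noG HG K KH; apply/noG/(subset_trans KH HG). Qed.

Lemma cardsU_uE_disjoint P Q : [disjoint uE P & uE Q] -> #|P :|: Q| = #|P| + #|Q|.
Proof.
move=> PQ; rewrite -cardsUI; suff -> : P :&: Q = set0 by rewrite cards0 addn0.
apply/setP=> g; rewrite !inE; apply/negP=> /andP[gP gQ].
by move/disjointFr: PQ => /(_ g.1 (imset_f _ gP)); rewrite (imset_f _ gQ).
Qed.

Lemma cycle_of_two_paths P Q s t :
  is_cgraph (P :|: Q) -> is_path P s t -> is_path Q s t ->
  uV P :&: uV Q \subset [set s; t] -> [disjoint uE P & uE Q] -> is_cycle (P :|: Q).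
Proof.
move=> PQg [_ [qP [qP0 uP lP EP]]] [_ [[|y l] [// _ uQ lQ EQ]]] VPQ EPQ.
have {}EP : uE P = walk_edges s qP by [].
have {}EQ : uE Q = walk_edges s (y :: l) by [].
rewrite /= in lQ; move: (uP) => /= /andP[sP uqP].
have : uniq (s :: rcons (belast y l) t) by rewrite -lQ -lastI.
rewrite /= mem_rcons inE negb_or rcons_uniq => /andP[/andP[st sb] /andP[tb ub]].
split=> //; exists (s :: qP ++ rev (belast y l)); split.
- rewrite /= size_cat size_rev size_belast.
  case: qP qP0 lP EP {uP sP uqP} => [|a [|b q]] // _ /= aT EP.
  case: l lQ EQ {uQ sb tb ub} => [|z l] //= yT EQ; subst a y.
  have stP : [set s; t] \in uE P by rewrite EP walk_edges_cons setU11.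
  by move: (disjointFr EPQ stP); rewrite EQ walk_edges_cons setU11.
- rewrite /= mem_cat mem_rev negb_or sP sb cat_uniq rev_uniq uqP ub /= andbT.
  apply/hasPn => v; rewrite mem_rev => vb; apply/negP => vqP.
  have vP : v \in uV P by apply: (mem_uV_walk EP qP0); rewrite inE vqP orbT.
  have vQ : v \in uV Q.
    by apply: (mem_uV_walk EQ) => //; rewrite (lastI y l) lQ !inE mem_rcons inE vb !orbT.
  have /subsetP/(_ v) := VPQ; rewrite inE vP vQ !inE => /(_ isT) /orP[] /eqP vst.
  + by rewrite -vst vb in sb.
  + by rewrite -vst vb in tb.
- rewrite /uE imsetU -/(uE P) -/(uE Q) cycle_edges_walk rcons_cat walk_edges_cat EP lP.
  by rewrite -rev_cons -lQ -[last y l]/(last s (y :: l)) walk_edges_rev EQ.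
Qed.

Lemma theta_even_cycle B P1 P2 P3 s t : is_cgraph B -> is_theta_of B P1 P2 P3 s t ->
  exists Q, [/\ Q \subset B, is_cycle Q & ~~ odd #|Q|].
Proof.
move=> Bg [_ [p1 p2 p3] BE [V12 V13 V23] [E12 E13 E23]]; subst B.
have even_union P Q : is_path P s t -> is_path Q s t ->
    uV P :&: uV Q \subset [set s; t] -> [disjoint uE P & uE Q] ->
    P :|: Q \subset P1 :|: P2 :|: P3 -> odd #|P| = odd #|Q| ->
    exists R : {set E}, [/\ R \subset P1 :|: P2 :|: P3, is_cycle R & ~~ odd #|R|].
  move=> pP pQ VPQ EPQ PQB oPQ; exists (P :|: Q); split=> //.
    exact: cycle_of_two_paths (is_cgraph_subset Bg PQB) pP pQ VPQ EPQ.
  by rewrite cardsU_uE_disjoint // oddD oPQ addbb.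
have S12 : P1 :|: P2 \subset P1 :|: P2 :|: P3 by rewrite subsetUl.
have S13 : P1 :|: P3 \subset P1 :|: P2 :|: P3 by rewrite -setUA setUS ?subsetUr.
have S23 : P2 :|: P3 \subset P1 :|: P2 :|: P3 by rewrite -setUA subsetUr.
case o12: (odd #|P1| == odd #|P2|); first exact: even_union p1 p2 V12 E12 S12 (eqP o12).
case o13: (odd #|P1| == odd #|P3|); first exact: even_union p1 p3 V13 E13 S13 (eqP o13).
apply: even_union p2 p3 V23 E23 S23 _.
by move: o12 o13; case: (odd #|P1|); case: (odd #|P2|); case: (odd #|P3|).
Qed.

Section Exchange.
Variables (Q : {set E}) (g e : E).
Hypotheses (gQ : g \in Q) (eg : e.1 = g.1).

Lemma uE_exchange : uE (e |: (Q :\ g)) = uE Q.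
Proof. by rewrite /uE -{2}(setD1K gQ) !imsetU1 eg. Qed.

Lemma is_cgraph_exchange : is_cgraph Q -> is_cgraph (e |: (Q :\ g)).
Proof.
move=> [Q2 Qinj]; split=> [x | x y].
  by rewrite in_setU1 => /orP[/eqP -> | /setD1P[_ /Q2 //]]; rewrite eg Q2.
have key z : z \in Q :\ g -> z.1 != e.1.
  by case/setD1P=> zg zQ; rewrite eg; apply: contra zg => /eqP/Qinj ->.
rewrite !in_setU1 => /orP[/eqP-> | xQ] /orP[/eqP-> | yQ] xy //.
- by move: (key y yQ); rewrite xy eqxx.
- by move: (key x xQ); rewrite xy eqxx.
- by apply: Qinj xy; [case/setD1P: xQ | case/setD1P: yQ].
Qed.

Lemma is_cycle_exchange : is_cycle Q -> is_cycle (e |: (Q :\ g)).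
Proof.
by move=> QC; apply: (is_cycle_uE _ QC uE_exchange); apply: is_cgraph_exchange; case: QC.
Qed.

Lemma card_exchange : is_cgraph Q -> #|e |: (Q :\ g)| = #|Q|.
Proof.
by move=> Qg; rewrite -(card_uE (is_cgraph_exchange Qg)) uE_exchange card_uE.
Qed.

Lemma rainbow_even_cycle_exchange : is_cycle Q -> ~~ odd #|Q| -> rainbow (Q :\ g) ->
  e.2 \notin colors (Q :\ g) ->
  [/\ is_cycle (e |: (Q :\ g)), rainbow (e |: (Q :\ g)) & ~~ odd #|e |: (Q :\ g)|].
Proof.
move=> QC Qeven RQ eQ; split; [exact: is_cycle_exchange | exact: rainbowU1 |].
by rewrite card_exchange //; case: QC.
Qed.

End Exchange.

Lemma uE_edges_over G K : uE K \subset uE G -> uE [set g in G | g.1 \in uE K] = uE K.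
Proof.
move=> /subsetP KG; apply/setP=> X; apply/imsetP/idP => [[g] | XK].
  by rewrite inE => /andP[_ gK] ->.
by have /imsetP[g gG gX] := KG X XK; exists g; rewrite // inE gG -gX XK.
Qed.

Lemma even_cycle_over G K : is_cgraph G -> is_cycle K -> ~~ odd #|K| ->
  uE K \subset uE G -> exists H,
  [/\ H \subset G, is_cycle H, ~~ odd #|H| & forall g, g \in H -> g.1 \in uE K].
Proof.
move=> Gg KC Keven KG; set H := [set g in G | g.1 \in uE K].
have HG : H \subset G by apply/subsetP=> g; rewrite inE => /andP[].
have Hg := is_cgraph_subset Gg HG; have uEH : uE H = uE K := uE_edges_over KG.
exists H; split=> [|||g]; [done | exact: is_cycle_uE Hg KC uEH | | by rewrite inE => /andP[]].
by rewrite -(card_uE Hg) uEH card_uE //; case: KC.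
Qed.

Lemma rainbowD1_repeat P g1 g2 : almost_rainbow P ->
  g1 \in P -> g2 \in P -> g1 != g2 -> g1.2 = g2.2 -> rainbow (P :\ g1).
Proof.
move=> aP g1P g2P g12 c12; rewrite /rainbow.
have -> : colors (P :\ g1) = colors P.
  apply/setP=> c; apply/imsetP/imsetP => [[e /setD1P[_ eP] ->] | [e eP ->]].
    by exists e.
  have [eg1 | eg1] := eqVneq e g1; last by exists e; rewrite // in_setD1 eg1.
  by exists g2; rewrite ?in_setD1 1?eq_sym ?g12 // eg1.
by move: aP; rewrite /almost_rainbow (cardsD1 g1 P) g1P addnC => -[].
Qed.

Lemma partition_repeated_color G ps g1 g2 : is_partition G ps ->
  g1 \in G -> g2 \in G -> g1.2 = g2.2 -> exists2 P, P \in ps & (g1 \in P) && (g2 \in P).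
Proof.
move=> [Gps disj] g1G g2G c12.
have part g : g \in G -> exists2 P, P \in ps & g \in P.
  by rewrite -Gps bigcup_seq => /bigcupP[P PP gP]; exists P.
have [P Pps g1P] := part g1 g1G; have [P' P'ps g2P'] := part g2 g2G.
exists P; rewrite // g1P; suff -> : P = P' by [].
have [iPP' | iPP'] := eqVneq (index P ps) (index P' ps).
  by rewrite -(nth_index set0 Pps) -(nth_index set0 P'ps) iPP'.
have [_] := disj _ _ (etrans (index_mem _ _) Pps) (etrans (index_mem _ _) P'ps) iPP'.
rewrite !nth_index // => /disjointFr/(_ (imset_f snd g1P)).
by rewrite c12 (imset_f snd g2P').
Qed.

Lemma frankenstein_repeated_color F (Cs Bs Ts : seq {set E}) g1 g2 : frankenstein F Cs Bs Ts ->
  g1 \in F -> g2 \in F -> g1 != g2 -> g1.2 = g2.2 ->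
  exists P, [/\ bad_piece P, P \subset F, g1 \in P & g2 \in P].
Proof.
move=> [_ _ Fpart [CsR BsB TsR _] _] g1F g2F g12 c12.
have [P Pps /andP[g1P g2P]] := partition_repeated_color Fpart g1F g2F c12.
have not_rainbow : ~ rainbow P by move=> /rainbowP/(_ g1 g2 g1P g2P c12)/eqP; apply/negP.
have PF : P \subset F.
  by case: Fpart => <- _; rewrite bigcup_seq; apply: bigcup_sup.
move: Pps; rewrite !mem_cat => /or3P[PCs | PBs | PTs].
- by case: (CsR P PCs).
- by exists P; split=> //; apply: BsB.
- by case: (TsR P PTs).
Qed.

Lemma bad_piece_even_cycle P g1 g2 : bad_piece P -> is_cgraph P ->
  no_rainbow_even_cycle P -> g1 \in P -> g2 \in P -> g1 != g2 -> g1.2 = g2.2 ->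
  exists Q, [/\ Q \subset P, is_cycle Q, ~~ odd #|Q|, g1 \in Q & rainbow (Q :\ g1)].
Proof.
move=> [aP _ [s [t [P1 [P2 [P3 [theta _ _ _]]]]]]] Pg noP g1P g2P g12 c12.
have RP := rainbowD1_repeat aP g1P g2P g12 c12.
have [Q [QP Qcyc Qeven]] := theta_even_cycle Pg theta.
have g1Q : g1 \in Q.
  apply: contraNT Qeven => g1Q.
  have QPg1 : Q \subset P :\ g1.
    apply/subsetP=> g gQ; rewrite in_setD1 (subsetP QP) // andbT.
    by apply: contraNneq g1Q => <-.
  exact: noP QP Qcyc (rainbow_subset RP QPg1).
by exists Q; split=> //; apply: rainbow_subset RP (setSD _ QP).
Qed.

End ColoredGraphs.

Lemma edges_without_outer_edge (n : nat) (D : 'I_(mcol n) -> {set cedge n 'I_(mcol n)})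
  (F : {set cedge n 'I_(mcol n)}) (lam : 'I_(mcol n)) : lam \notin colors F ->
  ~ (exists f, f \in D lam /\ outer_edge D F f) -> uE (D lam) \subset uE F.
Proof.
move=> lamF no_outer; apply/subsetP=> _ /imsetP[f fD ->]; apply: NNPP => fF; apply: no_outer.
exists f; split=> //; split; first by apply/bigcupP; exists lam.
by move=> g gF; apply/negP=> /andP[/eqP gf _]; apply: fF; rewrite -gf imset_f.
Qed.

Theorem proposition3p1 (n : nat) (D : 'I_(mcol n) -> {set cedge n 'I_(mcol n)})
  (F : {set cedge n 'I_(mcol n)}) (Cs Bs Ts : seq {set cedge n 'I_(mcol n)}) :
  1 <= n ->
  even_cycle_family D ->
  optimal_frankenstein D F Cs Bs Ts ->
  forall lam : 'I_(mcol n), lam \notin colors F ->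
    exists f, f \in D lam /\ outer_edge D F f.
Proof.
move=> _ [HD noD] [[[Fg FD] Ffrank] _] lam lamF.
have [Dcyc Deven Dcol] := HD lam.
apply: NNPP => /(edges_without_outer_edge lamF) covered.
have [H [HF Hcyc Heven HoverD]] := even_cycle_over Fg Dcyc Deven covered.
have noF : no_rainbow_even_cycle F by case: Ffrank.
have [g1 [g2 [g1H g2H g12 c12]]] :=
  not_rainbow_repeat (fun RH => negP Heven (noF _ HF Hcyc RH)).
have [P [Pbad PF g1P g2P]] :=
  frankenstein_repeated_color Ffrank (subsetP HF _ g1H) (subsetP HF _ g2H) g12 c12.
have [Q [QP Qcyc Qeven g1Q RQ]] := bad_piece_even_cycle Pbad
  (is_cgraph_subset Fg PF) (no_rainbow_even_cycle_subset noF PF) g1P g2P g12 c12.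
have QF := subset_trans QP PF.
have /imsetP[e eD eg1] := HoverD g1 g1H.
have eQ : e.2 \notin colors (Q :\ g1).
  rewrite (Dcol e eD); apply: contra lamF; apply/subsetP.
  exact: imsetS (subset_trans (subsetDl Q _) QF).
have [Q'cyc Q'R Q'even] := rainbow_even_cycle_exchange g1Q (esym eg1) Qcyc Qeven RQ eQ.
have Q'D : e |: (Q :\ g1) \subset unionD D.
  apply/subsetP=> g; rewrite in_setU1 => /orP[/eqP -> | /setD1P[_ gQ]].
    by apply/bigcupP; exists lam.
  exact: subsetP FD _ (subsetP QF _ gQ).
by move: (noD _ Q'D Q'cyc Q'R); rewrite (negbTE Q'even).
Qed.
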